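(* For every integer $d\ge1$ and every integer $0\le i\le d$, $$a\Big(\tbinom{d+2}{2}-1,\,d+1,\,i\Big)\ \ge\ a\Big(\tbinom{d+2}{2},\,d+1,\,i\Big).$$
   Context: $a(n,k,l)$ denotes the number of integer vectors $(a_1,\dots,a_l)$ with $a_1+\dots+a_l=n$ and $1\le a_j\le k$ for all $j$. *)

From mathcomp Require Import all_boot.
Set Implicit Arguments. Unset Strict Implicit. Unset Printing Implicit Defensive.

(* Vectors are encoded as finite functions
   'I_l -> 'I_k.+1 (values in {0..k}); the constraint 1 <= a_j is explicit. *)
Definition a (n k l : nat) : nat :=
  #|[set f : {ffun 'I_l -> 'I_k.+1} |
      [forall j, 0 < (f j : nat)] && (\sum_(j < l) (f j : nat) == n)]|.

(* The count a(n, k, l) is the coefficient of x^n in (x + x^2 + ... + x^k)^l.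
   These coefficients are symmetric about l(k+1)/2 and, by induction on l,
   non-increasing beyond it: the step from l to l + 1 amounts to comparing two
   coefficients of the l-th power lying k + 1 apart, which the induction
   hypothesis settles after reflecting the smaller index through the centre
   when needed.  Since i <= d, the index C(d+2,2) - 1 already lies beyond the
   centre i(d+2)/2, which gives the claim. *)

From mathcomp Require Import all_boot.
From mathcomp Require Import ssralg ssrnum ssrint poly zify.
Import GRing.Theory.

Definition dice_poly (k : nat) : {poly nat} :=
  (\sum_(v < k.+1 | (0 < v)%N) 'X^v)%R.

Lemma a_coef_dice_poly (n k l : nat) : a n k l = ((dice_poly k ^+ l)`_n)%R.
Proof.
rewrite /a -sum1_card -[l in (_ ^+ l)%R]card_ord -prodr_const /dice_poly.
rewrite (eq_bigr _ (fun _ _ => big_mkcond _ _)).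
rewrite bigA_distr_bigA coef_sum big_mkcond /=.
apply: eq_bigr => f _; rewrite inE.
have [pos_f | /forallPn[j]] /= := boolP [forall j, 0 < (f j : nat)].
  rewrite (eq_bigr (fun j => ('X^(f j))%R)) => [|j _]; last first.
    by rewrite (forallP pos_f).
  by rewrite prodrXr coefXn eq_sym; case: eqP.
rewrite -leqNgt leqn0 => /eqP fj0.
by rewrite (bigD1 j) //= fj0 mul0r coef0.
Qed.

(* Indexing by integers makes the recursion and the reflection m |-> l(k+1) - m
   free of truncated subtraction. *)
Fixpoint ncompositions (k l : nat) (m : int) : nat :=
  if l is l'.+1 then \sum_(v < k) ncompositions k l' (m - (v.+1)%:Z)%R
  else (m == 0%R).

Section Compositions.

Variable k : nat.

Lemma ncompositions_lt0 (l : nat) (m : int) :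
  (m < 0)%R -> ncompositions k l m = 0.
Proof.
elim: l m => [|l IHl] m m_lt0 /=; first by case: eqP m_lt0 => // ->.
by rewrite big1 // => v _; apply: IHl; lia.
Qed.

Lemma coef_dice_poly_exp (l m : nat) :
  ((dice_poly k ^+ l)`_m)%R = ncompositions k l m.
Proof.
elim: l m => [|l IHl] m; first by rewrite expr0 coefC; case: m.
rewrite exprS {1}/dice_poly big_mkcond mulr_suml coef_sum big_ord_recl /=.
rewrite mul0r coef0 add0r; apply: eq_bigr => v _.
rewrite /= /bump /= add1n coefXnM.
case: ltnP => [m_lt | v_le]; first by rewrite ncompositions_lt0 //; lia.
by rewrite IHl; congr ncompositions; lia.
Qed.

Lemma ncompositions_sym (l : nat) (m : int) :
  ncompositions k l m = ncompositions k l ((l * k.+1)%:Z - m)%R.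
Proof.
elim: l m => [|l IHl] m /=; first by rewrite mul0n sub0r oppr_eq0.
rewrite (reindex_inj rev_ord_inj); apply: eq_bigr => v _ /=.
by rewrite IHl; congr ncompositions; have := ltn_ord v; lia.
Qed.

End Compositions.

Lemma nonincr_above (f : int -> nat) (c x y : int) :
  (forall m, (c <= 2 * m)%R -> f (m + 1)%R <= f m) ->
  (c <= 2 * x)%R -> (x <= y)%R -> f y <= f x.
Proof.
move=> f_step c_le_x x_le_y.
have -> : y = (x + `|y - x|%N%:Z)%R by lia.
elim: `|y - x|%N => [|t IHt]; first by rewrite addr0.
apply: leq_trans IHt; have -> : (x + t.+1%:Z = x + t%:Z + 1)%R by lia.
by apply: f_step; lia.
Qed.

Lemma ncompositions_step_le (k l : nat) (m : int) :
  ((l * k.+1)%:Z <= 2 * m)%R ->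
  ncompositions k l (m + 1)%R <= ncompositions k l m.
Proof.
elim: l m => [|l IHl] m /=.
  by rewrite mul0n => m_ge0; case: (m =P 0%R) => [-> //|_]; case: eqP => //; lia.
case: k IHl => [|k] IHl; first by rewrite !big_ord0.
rewrite mulSn => centre_le_m.
rewrite big_ord_recl big_ord_recr /= addnC addrK.
rewrite (eq_bigr (fun v : 'I_k => ncompositions k.+1 l (m - v.+1%:Z)%R))
  => [|v _]; last by congr ncompositions; rewrite /bump /=; lia.
rewrite leq_add2l.
have [low_le | low_gt] := boolP ((l * k.+2)%:Z <= 2 * (m - k.+1%:Z))%R.
  by apply: nonincr_above IHl low_le _; lia.
rewrite (ncompositions_sym _ _ (m - k.+1%:Z)%R).
by apply: nonincr_above IHl _ _; lia.
Qed.

Lemma a_step_le (n k l : nat) : l * k.+1 <= 2 * n -> a n.+1 k l <= a n k l.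
Proof.
move=> centre_le_n; rewrite !a_coef_dice_poly !coef_dice_poly_exp.
have -> : Posz n.+1 = (n%:Z + 1)%R by lia.
by apply: ncompositions_step_le; lia.
Qed.

Lemma mul2_bin2 (n : nat) : 2 * 'C(n, 2) = n * n.-1.
Proof. by rewrite -mul_bin_diag bin1. Qed.

Theorem lemma6p2 (d i : nat) :
  1 <= d -> i <= d ->
  a 'C(d + 2, 2) (d + 1) i <= a ('C(d + 2, 2) - 1) (d + 1) i.
Proof.
move=> _ i_le_d.
have C_pos : 0 < 'C(d + 2, 2) by rewrite bin_gt0 leq_addl.
rewrite -{1}(subnK C_pos) addn1; apply: a_step_le.
have i_centre : i * (d + 2) <= d * (d + 2) by rewrite leq_mul2r i_le_d orbT.
by rewrite mulnBr mul2_bin2; nia.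
Qed.
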